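(* For $n\ge1$, $\left|\Pi_n\wr C_2(1^11^2,1^12^2)\right|=(n+1)B(n)$, where $B(n)$ is the $n$th Bell number.
   Context: For $n\ge0$ let $[n]=\{1,\dots,n\}$. A $2$-colored set partition of $[n]$ is a set partition of $[n]$ together with an assignment of a color from $\{1,2\}$ to each element; $\Pi_n\wr C_2$ is the set of these. For a set $S$ of patterns, $\Pi_n\wr C_2(S)$ is the set of such colored partitions avoiding every pattern in $S$ in the pattern sense. For the patterns used here: $\sigma$ contains $1^11^2$ iff there are $i<j$ in the same block with $i$ colored $1$ and $j$ colored $2$; $\sigma$ contains $1^12^2$ iff there are $i<j$ in different blocks with $i$ colored $1$ and $j$ colored $2$. $B(n)$ is the number of set partitions of $[n]$. *)

From mathcomp Require Import all_boot.
Set Implicit Arguments. Unset Strict Implicit. Unset Printing Implicit Defensive.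

(* [n] = {1,...,n} is represented by 'I_n = {0,...,n-1} (order-preserving shift).
   Colors {1,2} are represented by 'I_2: color 1 <-> value 0, color 2 <-> value 1. *)

Definition set_partitions (n : nat) : {set {set {set 'I_n}}} :=
  [set P : {set {set 'I_n}} | partition P [set: 'I_n]].

Definition bell (n : nat) : nat := #|set_partitions n|.

Definition contains_11_12 n (P : {set {set 'I_n}}) (c : {ffun 'I_n -> 'I_2}) : bool :=
  [exists i : 'I_n, exists j : 'I_n,
     [&& i < j, [exists B in P, (i \in B) && (j \in B)],
         val (c i) == 0 & val (c j) == 1]].

Definition contains_11_22 n (P : {set {set 'I_n}}) (c : {ffun 'I_n -> 'I_2}) : bool :=
  [exists i : 'I_n, exists j : 'I_n,
     [&& i < j, ~~ [exists B in P, (i \in B) && (j \in B)],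
         val (c i) == 0 & val (c j) == 1]].

Definition avoiders (n : nat) : {set {set {set 'I_n}} * {ffun 'I_n -> 'I_2}} :=
  [set x | (x.1 \in set_partitions n) && ~~ contains_11_12 x.1 x.2
                                       && ~~ contains_11_22 x.1 x.2].

From mathcomp Require Import all_boot.
Set Implicit Arguments. Unset Strict Implicit. Unset Printing Implicit Defensive.

(* Together the two patterns forbid a color-1 element before a color-2 element,
   whether or not the two share a block. So avoidance is a condition on the
   coloring alone: it must color an initial segment [1..k] by 2 and the rest
   by 1, which leaves n + 1 colorings for each of the B(n) partitions. *)

Definition color_ascent n (c : {ffun 'I_n -> 'I_2}) : bool :=
  [exists i : 'I_n, exists j : 'I_n, [&& i < j, val (c i) == 0 & val (c j) == 1]].

Lemma contains_11_12_or_11_22 n (P : {set {set 'I_n}}) c :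
  contains_11_12 P c || contains_11_22 P c = color_ascent c.
Proof.
apply/orP/existsP => [[] /existsP[i /existsP[j /and4P[lt_ij _ ci cj]]]|[i /existsP[j]]].
- by exists i; apply/existsP; exists j; rewrite lt_ij ci cj.
- by exists i; apply/existsP; exists j; rewrite lt_ij ci cj.
- move=> /and3P[lt_ij ci cj].
  case: (boolP [exists B in P, (i \in B) && (j \in B)]) => same.
  + by left; apply/existsP; exists i; apply/existsP; exists j; rewrite lt_ij same ci cj.
  + by right; apply/existsP; exists i; apply/existsP; exists j; rewrite lt_ij same ci cj.
Qed.

Lemma avoidersE n :
  avoiders n = setX (set_partitions n) [set c | ~~ color_ascent c].
Proof.
by apply/setP => -[P c]; rewrite !inE -andbA -negb_or contains_11_12_or_11_22.
Qed.

Definition threshold_coloring n (k : 'I_n.+1) : {ffun 'I_n -> 'I_2} :=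
  [ffun i : 'I_n => if i < k then ord_max else ord0].

Lemma threshold_coloring_inj n : injective (@threshold_coloring n).
Proof.
suff le_k (k k' : 'I_n.+1) : threshold_coloring k = threshold_coloring k' -> (k <= k')%N.
  by move=> k1 k2 eq_c; apply/val_inj/eqP; rewrite eqn_leq !le_k.
move=> eq_c; rewrite leqNgt; apply/negP => lt_k'k.
have k'_lt_n : k' < n := leq_trans lt_k'k (ltn_ord k).
move/ffunP/(_ (Ordinal k'_lt_n)): eq_c; rewrite !ffunE /= lt_k'k ltnn.
by move/(congr1 val).
Qed.

Lemma threshold_coloring_no_ascent n (k : 'I_n.+1) :
  ~~ color_ascent (threshold_coloring k).
Proof.
apply/existsPn => i; apply/existsPn => j; rewrite !ffunE.
apply/negP => /and3P[lt_ij]; case: ifP => // /negbT; rewrite -leqNgt => le_ki.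
by rewrite ltnNge (leq_trans le_ki (ltnW lt_ij)).
Qed.

Lemma no_ascent_threshold n (c : {ffun 'I_n -> 'I_2}) :
  ~~ color_ascent c -> exists k, c = threshold_coloring k.
Proof.
move=> /existsPn no_asc.
have asc_free (i j : 'I_n) : i < j -> val (c i) == 0 -> val (c j) == 1 -> False.
  by move=> lt_ij ci cj; move/existsPn/(_ j): (no_asc i); rewrite lt_ij ci cj.
have c_max (i : 'I_n) : val (c i) != 0 -> c i = ord_max.
  by case: (c i) => -[|[|]] // ? _; apply/val_inj.
have c_ord0 (i : 'I_n) : val (c i) == 0 -> c i = ord0 by move=> /eqP ci; apply/val_inj.
case: (pickP [pred i | val (c i) == 0]) => [i0 c_i0 | no0]; last first.
  by exists ord_max; apply/ffunP => i; rewrite ffunE /= ltn_ord c_max // (negbT (no0 i)).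
case: (arg_minnP val c_i0) => j /= c_j j_min.
exists (widen_ord (leqnSn n) j); apply/ffunP => i; rewrite ffunE /=.
case: ltnP => [lt_ij | le_ji].
- by apply: c_max; apply: contraTN lt_ij => /j_min; rewrite -leqNgt.
- apply: c_ord0; apply: contraT => ci; move: le_ji; rewrite leq_eqVlt.
  case/predU1P => [/val_inj eq_ji | lt_ji]; first by rewrite -eq_ji c_j in ci.
  by case: (asc_free j i lt_ji c_j); rewrite c_max.
Qed.

Lemma no_ascent_colorings n :
  [set c | ~~ color_ascent c] = [set threshold_coloring k | k : 'I_n.+1].
Proof.
apply/setP => c; rewrite inE; apply/idP/imsetP.
- by case/no_ascent_threshold => k ->; exists k.
- by case=> k _ ->; apply: threshold_coloring_no_ascent.
Qed.

(* The count also holds for n = 0. *)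
Theorem mainTheorem8 (n : nat) (hn : 1 <= n) :
  #|avoiders n| = n.+1 * bell n.
Proof.
rewrite avoidersE cardsX no_ascent_colorings card_imset; last first.
  exact: threshold_coloring_inj.
by rewrite card_ord mulnC.
Qed.
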